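(* Let $m\ge0$ and let $\alpha=(\alpha_0,\dots,\alpha_{2m+5})\in\mathbb{R}^{2m+6}$ satisfy \[ -\tfrac12\le\alpha_0\le0,\quad\alpha_1=-\alpha_0,\quad\alpha_2\le\alpha_3\le\dots\le\alpha_{2m+5}\le\alpha_2+1,\quad\sum_{r=2}^{2m+5}\alpha_r=m+1 . \] Let \[ E(\alpha)=-2\alpha_0+\sum_{r\ge2:\alpha_r\le\alpha_0}2\alpha_0+\sum_{r\ge2:\alpha_0<\alpha_r<-\alpha_0}(\alpha_0+\alpha_r)+\sum_{r\ge2:1+\alpha_0<\alpha_r<1-\alpha_0}(\alpha_r-1-\alpha_0)+\sum_{r\ge2:\alpha_r\ge1-\alpha_0}(-2\alpha_0), \] all sums being over $2\le r\le 2m+5$. Write $A=\#\{r\ge2:\alpha_r<-\alpha_0\}$ and $B=\#\{r\ge2:\alpha_r>1+\alpha_0\}$. Then $E(\alpha)=0$ if and only if one of the following holds: (1) $\alpha_0=0$ or $\alpha_0=-\frac12$; (2) $\alpha_2\le\alpha_0$ and $-\alpha_0\le\alpha_r\le1+\alpha_0$ for all $r\ge3$; (3) $\alpha_0<\alpha_r<1-\alpha_0$ for all $r\ge2$, $2\le A\le m+3$, $B\le m+1$, and \[ \sum_{r\ge2:-\alpha_0\le\alpha_r\le1+\alpha_0}\alpha_r=(m+1-B)+(A-2-B)\alpha_0 . \] Moreover, for each choice of $A$, $B$ and $\alpha_0$ (as in (3)) there exist values of $\alpha_r$ ($r\ge2$) solving this equation; if $A=m+3$ then $\alpha_r=1+\alpha_0$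 for all $r$ with $-\alpha_0\le\alpha_r\le1+\alpha_0$, and if $B=m+1$ then $\alpha_r=-\alpha_0$ for all $r$ with $-\alpha_0\le\alpha_r\le1+\alpha_0$. *)

From HB Require Import structures.
From mathcomp Require Import all_boot all_order all_algebra.
Set Implicit Arguments. Unset Strict Implicit. Unset Printing Implicit Defensive.
Import Order.TTheory GRing.Theory Num.Theory.
Local Open Scope ring_scope.

(* alpha = (alpha_0, ..., alpha_{2m+5}) is encoded as a : nat -> R,
   only the values at indices 0 .. 2m+5 matter. *)

Definition admissible (R : realFieldType) (m : nat) (a : nat -> R) : Prop :=
  - 2^-1 <= a 0%N /\ a 0%N <= 0 /\ a 1%N = - a 0%N /\
  (forall r : nat, (2 <= r)%N -> (r < (m.*2 + 5))%N -> a r <= a r.+1) /\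
  a (m.*2 + 5)%N <= a 2%N + 1 /\
  \sum_(2 <= r < m.*2 + 6) a r = m.+1%:R.

Definition Efun (R : realFieldType) (m : nat) (a : nat -> R) : R :=
  - 2 * a 0%N
  + \sum_(2 <= r < m.*2 + 6 | a r <= a 0%N) (2 * a 0%N)
  + \sum_(2 <= r < m.*2 + 6 | (a 0%N < a r) && (a r < - a 0%N)) (a 0%N + a r)
  + \sum_(2 <= r < m.*2 + 6 | (1 + a 0%N < a r) && (a r < 1 - a 0%N))
        (a r - 1 - a 0%N)
  + \sum_(2 <= r < m.*2 + 6 | 1 - a 0%N <= a r) (- 2 * a 0%N).

Definition cntA (R : realFieldType) (m : nat) (a : nat -> R) : nat :=
  \sum_(2 <= r < m.*2 + 6 | a r < - a 0%N) 1%N.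

Definition cntB (R : realFieldType) (m : nat) (a : nat -> R) : nat :=
  \sum_(2 <= r < m.*2 + 6 | 1 + a 0%N < a r) 1%N.

Definition middle (R : realFieldType) (a : nat -> R) (r : nat) : bool :=
  (- a 0%N <= a r) && (a r <= 1 + a 0%N).

Definition cond1 (R : realFieldType) (m : nat) (a : nat -> R) : Prop :=
  a 0%N = 0 \/ a 0%N = - 2^-1.

Definition cond2 (R : realFieldType) (m : nat) (a : nat -> R) : Prop :=
  a 2%N <= a 0%N /\
  (forall r : nat, (3 <= r)%N -> (r < m.*2 + 6)%N ->
     - a 0%N <= a r /\ a r <= 1 + a 0%N).

Definition cond3 (R : realFieldType) (m : nat) (a : nat -> R) : Prop :=
  [/\ (forall r : nat, (2 <= r)%N -> (r < m.*2 + 6)%N ->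
         a 0%N < a r /\ a r < 1 - a 0%N),
      (2 <= cntA m a <= m + 3)%N,
      (cntB m a <= m + 1)%N &
      \sum_(2 <= r < m.*2 + 6 | middle a r) a r
        = (m.+1 - cntB m a)%N%:R
          + ((cntA m a)%:R - 2 - (cntB m a)%:R) * a 0%N].

From HB Require Import structures.
From mathcomp Require Import all_boot all_order all_algebra.
From mathcomp Require Import zify ring lra.
Import Order.TTheory GRing.Theory Num.Theory.
Set Implicit Arguments. Unset Strict Implicit. Unset Printing Implicit Defensive.
Local Open Scope ring_scope.

(* Write [Efun] as [- 2 a0] plus one contribution [Eterm a0 x] per coordinate
   [x = a r].  If every coordinate lies strictly between [a0] and [1 - a0], the
   contribution of [x] is [x - [x middle] x + [x < - a0] a0 - [x > 1 + a0] (1 + a0)],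
   so that [Efun = - 2 a0 + (m + 1) - Mid + A a0 - B (1 + a0)] with [Mid] the
   sum of the middle coordinates, and [Efun = 0] is the equation of (3).  The
   [2m + 4 - A - B] middle coordinates lie in [[- a0, 1 + a0]], so this
   equation turns [(m + 3 - A) (1 + 2 a0)] and [(m + 1 - B) (1 + 2 a0)] into
   nonnegative gaps, which bounds [A] and [B] and yields the equality cases.
   Outside the interior case, monotonicity leaves either [a 2 <= a0], which
   forces (2), or a coordinate [>= 1 - a0], which makes [Efun > 0].  The
   witnesses of the existence part take three values [L < mu < H]. *)

Lemma psumr_eq0_nat (R : numDomainType) lo hi (F : nat -> R) :
  (forall r, (lo <= r < hi)%N -> 0 <= F r) -> \sum_(lo <= r < hi) F r = 0 ->
  forall r, (lo <= r < hi)%N -> F r = 0.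
Proof.
move=> F_ge0 /eqP; rewrite big_seq_cond psumr_eq0 => [/allP F0 r r_in|r].
  by apply/eqP; have := F0 r; rewrite mem_index_iota r_in => /(_ isT).
by rewrite andbT mem_index_iota; apply: F_ge0.
Qed.

Lemma sumr_ge0_nat (R : numDomainType) lo hi (F : nat -> R) :
  (forall r, (lo <= r < hi)%N -> 0 <= F r) -> 0 <= \sum_(lo <= r < hi) F r.
Proof.
move=> F_ge0; rewrite big_seq; apply: sumr_ge0 => r.
by rewrite mem_index_iota; apply: F_ge0.
Qed.

Lemma natrSB (R : pzRingType) (n k : nat) :
  (k <= n.+1)%N -> (n.+1 - k)%:R = n%:R + 1 - k%:R :> R.
Proof. by move=> le_kn; rewrite natrB // natr1. Qed.

Section Contributions.
Variable R : realFieldType.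

Definition Eterm (a0 x : R) : R :=
  (if x <= a0 then 2 * a0 else 0)
  + (if (a0 < x) && (x < - a0) then a0 + x else 0)
  + (if (1 + a0 < x) && (x < 1 - a0) then x - 1 - a0 else 0)
  + (if 1 - a0 <= x then - 2 * a0 else 0).

Definition low_ind (a0 x : R) : R := if x < - a0 then 1 else 0.
Definition high_ind (a0 x : R) : R := if 1 + a0 < x then 1 else 0.
Definition mid_ind (a0 x : R) : R := if (- a0 <= x) && (x <= 1 + a0) then 1 else 0.

Ltac case_thresholds x a0 :=
  case: (lerP x a0) => ?; case: (ltrP x (- a0)) => ?;
  case: (lerP x (1 + a0)) => ?; case: (ltrP x (1 - a0)) => ?;
  rewrite /= ?andbT ?andbF ?andTb ?andFb /=; try lra.

Lemma low_high_mid_ind (a0 x : R) :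
  - 2^-1 <= a0 -> low_ind a0 x + high_ind a0 x + mid_ind a0 x = 1.
Proof. by move=> ?; rewrite /low_ind /high_ind /mid_ind; case_thresholds x a0. Qed.

Lemma Eterm_interior (a0 x : R) : - 2^-1 <= a0 -> a0 <= 0 -> a0 < x -> x < 1 - a0 ->
  Eterm a0 x
    = x - mid_ind a0 x * x + low_ind a0 x * a0 - high_ind a0 x * (1 + a0).
Proof.
by move=> ? ? ? ?; rewrite /Eterm /low_ind /high_ind /mid_ind; case_thresholds x a0.
Qed.

Lemma Eterm_low_bound (a0 x : R) : a0 <= 0 -> a0 < x -> low_ind a0 x * (x + a0) <= Eterm a0 x.
Proof. by move=> ? ?; rewrite /Eterm /low_ind; case_thresholds x a0. Qed.

Lemma Eterm_le0 (a0 x : R) : a0 <= 0 -> x <= 1 + a0 -> Eterm a0 x <= 0.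
Proof. by move=> ? ?; rewrite /Eterm; case_thresholds x a0. Qed.

Lemma Eterm_lt0 (a0 x : R) : - 2^-1 <= a0 -> a0 < 0 -> x < - a0 -> Eterm a0 x < 0.
Proof. by move=> ? ? ?; rewrite /Eterm; case_thresholds x a0. Qed.

Lemma Eterm_ge0 (a0 x : R) : a0 <= 0 -> - a0 <= x -> 0 <= Eterm a0 x.
Proof. by move=> ? ?; rewrite /Eterm; case_thresholds x a0. Qed.

Lemma Eterm_le (a0 x : R) : a0 <= 0 -> x <= a0 -> Eterm a0 x = 2 * a0.
Proof. by move=> ? ?; rewrite /Eterm; case_thresholds x a0. Qed.

Lemma Eterm_mid (a0 x : R) : a0 <= 0 -> - a0 <= x -> x <= 1 + a0 -> Eterm a0 x = 0.
Proof. by move=> ? ? ?; rewrite /Eterm; case_thresholds x a0. Qed.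

Lemma Eterm0 (x : R) : Eterm 0 x = 0.
Proof. by rewrite /Eterm; case_thresholds x (0 : R). Qed.

Lemma Eterm_half (x : R) : - 2^-1 <= x -> x <= 3 / 2 -> Eterm (- 2^-1) x = x - 2^-1.
Proof. by move=> ? ?; rewrite /Eterm; case_thresholds x (- 2^-1 : R). Qed.

Lemma mid_ind_mul_le (a0 x : R) : mid_ind a0 x * x <= (1 + a0) * mid_ind a0 x.
Proof. by rewrite /mid_ind; case: ifP => [/andP [_ ?]|_]; lra. Qed.

Lemma mid_ind_mul_ge (a0 x : R) : - a0 * mid_ind a0 x <= mid_ind a0 x * x.
Proof. by rewrite /mid_ind; case: ifP => [/andP [? _]|_]; lra. Qed.

End Contributions.

Definition interior (R : realFieldType) (m : nat) (a : nat -> R) : Prop :=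
  forall r : nat, (2 <= r)%N -> (r < m.*2 + 6)%N -> a 0%N < a r /\ a r < 1 - a 0%N.

Section Efun_zero.
Variables (R : realFieldType) (m : nat) (a : nat -> R).
Local Notation a0 := (a 0%N).
Local Notation A := ((cntA m a)%:R : R).
Local Notation B := ((cntB m a)%:R : R).
Local Notation Mid := (\sum_(2 <= r < m.*2 + 6 | middle a r) a r).
Local Notation K := (\sum_(2 <= r < m.*2 + 6) mid_ind a0 (a r)).

Lemma Efun_sum : Efun m a = - 2 * a0 + \sum_(2 <= r < m.*2 + 6) Eterm a0 (a r).
Proof.
rewrite /Efun /Eterm [in RHS]big_split /= [in RHS]big_split /= [in RHS]big_split /=.
by rewrite -!big_mkcond /= !addrA.
Qed.

Lemma cntA_sum : A = \sum_(2 <= r < m.*2 + 6) low_ind a0 (a r).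
Proof. by rewrite /cntA natr_sum big_mkcond. Qed.

Lemma cntB_sum : B = \sum_(2 <= r < m.*2 + 6) high_ind a0 (a r).
Proof. by rewrite /cntB natr_sum big_mkcond. Qed.

Lemma middle_sum : Mid = \sum_(2 <= r < m.*2 + 6) mid_ind a0 (a r) * a r.
Proof.
rewrite big_mkcond; apply: eq_bigr => r _.
by rewrite /middle /mid_ind; case: ifP; rewrite ?mul1r ?mul0r.
Qed.

Lemma sumr_const_range (c : R) : \sum_(2 <= r < m.*2 + 6) c = c * (2 * m%:R + 4).
Proof.
rewrite sumr_const_nat -[LHS]mulr_natr.
have -> : (m.*2 + 6 - 2 = 2 * m + 4)%N by lia.
by rewrite natrD natrM.
Qed.

Lemma cnt_partition : - 2^-1 <= a0 -> A + B + K = 2 * m%:R + 4.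
Proof.
move=> a0_ge; rewrite cntA_sum cntB_sum -!big_split /= -[RHS]mul1r -sumr_const_range.
by apply: eq_bigr => r _; rewrite low_high_mid_ind.
Qed.

Lemma middle_sum_le : Mid <= (1 + a0) * K.
Proof. by rewrite middle_sum mulr_sumr; apply: ler_sum => r _; apply: mid_ind_mul_le. Qed.

Lemma middle_sum_ge : - a0 * K <= Mid.
Proof. by rewrite middle_sum mulr_sumr; apply: ler_sum => r _; apply: mid_ind_mul_ge. Qed.

Lemma middle_eq_top : Mid = (1 + a0) * K ->
  forall r, (2 <= r)%N -> (r < m.*2 + 6)%N -> middle a r -> a r = 1 + a0.
Proof.
rewrite middle_sum mulr_sumr => /esym/eqP; rewrite -subr_eq0 -sumrB => /eqP gap0.
move=> r r2 rN mid_r.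
have gap_ge0 i : (2 <= i < m.*2 + 6)%N ->
    0 <= (1 + a0) * mid_ind a0 (a i) - mid_ind a0 (a i) * a i.
  by move=> _; rewrite subr_ge0 mid_ind_mul_le.
have := psumr_eq0_nat gap_ge0 gap0 (r := r); rewrite r2 rN /mid_ind -/(middle a r) mid_r.
by move=> /(_ isT); lra.
Qed.

Lemma middle_eq_bottom : Mid = - a0 * K ->
  forall r, (2 <= r)%N -> (r < m.*2 + 6)%N -> middle a r -> a r = - a0.
Proof.
rewrite middle_sum mulr_sumr => /eqP; rewrite -subr_eq0 -sumrB => /eqP gap0.
move=> r r2 rN mid_r.
have gap_ge0 i : (2 <= i < m.*2 + 6)%N ->
    0 <= mid_ind a0 (a i) * a i - - a0 * mid_ind a0 (a i).
  by move=> _; rewrite subr_ge0 mid_ind_mul_ge.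
have := psumr_eq0_nat gap_ge0 gap0 (r := r); rewrite r2 rN /mid_ind -/(middle a r) mid_r.
by move=> /(_ isT); lra.
Qed.

Lemma middle_gaps : - 2^-1 <= a0 ->
  Mid = m%:R + 1 - B + (A - 2 - B) * a0 ->
  (1 + a0) * K - Mid = (m%:R + 3 - A) * (1 + 2 * a0)
  /\ Mid + a0 * K = (m%:R + 1 - B) * (1 + 2 * a0).
Proof.
move=> a0_ge ->; have eK : K = 2 * m%:R + 4 - A - B by have := cnt_partition a0_ge; lra.
by rewrite eK; split; ring.
Qed.

Lemma cnt_bounds : - 2^-1 < a0 ->
  Mid = m%:R + 1 - B + (A - 2 - B) * a0 ->
  (cntA m a <= m + 3)%N /\ (cntB m a <= m + 1)%N.
Proof.
move=> a0_gt mid_eq; have [gapA gapB] := middle_gaps (ltW a0_gt) mid_eq.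
have pos : 0 < 1 + 2 * a0 by lra.
have := middle_sum_le; have := middle_sum_ge => ge le.
rewrite -!(ler_nat R) !natrD; split.
- have : 0 <= (m%:R + 3 - A) * (1 + 2 * a0) by lra.
  by rewrite pmulr_lge0 //; lra.
- have : 0 <= (m%:R + 1 - B) * (1 + 2 * a0) by lra.
  by rewrite pmulr_lge0 //; lra.
Qed.

Lemma Efun_interior : - 2^-1 <= a0 -> a0 <= 0 ->
  \sum_(2 <= r < m.*2 + 6) a r = m.+1%:R -> interior m a ->
  Efun m a = - 2 * a0 + (m%:R + 1) - Mid + A * a0 - B * (1 + a0).
Proof.
move=> a0_ge a0_le sum_a inside.
rewrite Efun_sum middle_sum cntA_sum cntB_sum natr1 -sum_a !mulr_suml -!addrA.
congr (_ + _); rewrite !addrA -sumrB -big_split -sumrB /=.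
apply: eq_big_nat => r /andP [r2 rN]; have [? ?] := inside r r2 rN.
by rewrite Eterm_interior.
Qed.

(* Coordinates below [- a0] contribute [a0 + x > 2 a0] and the others
   contribute [>= 0], while [Efun = 0] makes the contributions add up to [2 a0]. *)
Lemma cntA_ge2 : - 2^-1 <= a0 -> a0 < 0 -> interior m a -> Efun m a = 0 ->
  (2 <= cntA m a)%N.
Proof.
move=> a0_ge a0_lt inside; rewrite Efun_sum => E0.
set S := \sum_(2 <= r < m.*2 + 6) low_ind a0 (a r) * (a r - a0).
have S_terms_ge0 r : (2 <= r < m.*2 + 6)%N -> 0 <= low_ind a0 (a r) * (a r - a0).
  move=> /andP [r2 rN]; have [? _] := inside r r2 rN.
  by rewrite /low_ind; case: ifP => _; lra.
have S_ge0 : 0 <= S by apply: sumr_ge0_nat.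
have lower : 2 * a0 * A + S <= 2 * a0.
  have -> : 2 * a0 * A + S = \sum_(2 <= r < m.*2 + 6) low_ind a0 (a r) * (a r + a0).
    by rewrite cntA_sum mulr_sumr -big_split; apply: eq_bigr => r _ /=; ring.
  have -> : 2 * a0 = \sum_(2 <= r < m.*2 + 6) Eterm a0 (a r) by lra.
  apply: ler_sum_nat => r /andP [r2 rN]; have [? _] := inside r r2 rN.
  exact: Eterm_low_bound (ltW a0_lt) _.
rewrite leqNgt; apply/negP => A_lt2.
have [A0 | A1] : cntA m a = 0%N \/ cntA m a = 1%N by lia.
  by move: lower; rewrite A0; lra.
have S0 : S = 0 by move: lower; rewrite A1; lra.
suff : A = 0 by rewrite A1 => /eqP; rewrite oner_eq0.
rewrite cntA_sum big_nat big1 // => r /andP [r2 rN].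
have := psumr_eq0_nat S_terms_ge0 S0 (r := r); rewrite r2 rN => /(_ isT) /eqP.
have [? _] := inside r r2 rN.
by rewrite mulf_eq0 subr_eq0 => /orP [/eqP -> //|/eqP ar]; lra.
Qed.

Lemma cond3_middle_eq : cond3 m a -> Mid = m%:R + 1 - B + (A - 2 - B) * a0.
Proof. by case=> _ _ B_le ->; rewrite natrSB // -addn1. Qed.

Hypothesis adm : admissible m a.

Lemma admissible_sorted r : (2 <= r)%N -> (r < m.*2 + 6)%N ->
  a 2%N <= a r /\ a r <= a (m.*2 + 5)%N.
Proof.
have [_ [_ [_ [step _]]]] := adm.
have mono : {in [pred i | 2 <= i <= m.*2 + 5]%N &,
    {homo a : i j / (i <= j)%N >-> i <= j}}.
  apply: homo_leq_in => [x|y x z|i j|i]; [exact: lexx|exact: le_trans|..].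
  - by rewrite !inE => ? ? k; rewrite inE; lia.
  - by rewrite !inE => ? ?; apply: step; lia.
by move=> r2 rN; split; apply: mono; rewrite ?inE; lia.
Qed.

Lemma admissible_spread : - 2^-1 <= a 2%N /\ a (m.*2 + 5)%N <= 3 / 2.
Proof.
have [_ [_ [_ [_ [top sum_a]]]]] := adm.
have m_ge0 : 0 <= m%:R :> R by apply: ler0n.
have e2m3 : (2 * m + 3)%:R = 2 * m%:R + 3 :> R by rewrite natrD natrM.
split.
- have : \sum_(3 <= r < m.*2 + 6) a r <= \sum_(3 <= r < m.*2 + 6) (a 2%N + 1).
    apply: ler_sum_nat => r /andP [r3 rN].
    by have [_ ?] := admissible_sorted (ltnW r3) rN; lra.
  rewrite sumr_const_nat -[X in _ <= X]mulr_natr.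
  have -> : (m.*2 + 6 - 3 = 2 * m + 3)%N by lia.
  have : a 2%N + \sum_(3 <= r < m.*2 + 6) a r = m%:R + 1.
    by rewrite natr1 -sum_a (@big_ltn _ _ _ 2) //; lia.
  by rewrite e2m3 => ? ?; nra.
- have : \sum_(2 <= r < m.*2 + 5) (a (m.*2 + 5)%N - 1) <= \sum_(2 <= r < m.*2 + 5) a r.
    apply: ler_sum_nat => r /andP [r2 rN].
    have rN6 : (r < m.*2 + 6)%N by lia.
    by have [? _] := admissible_sorted r2 rN6; lra.
  rewrite sumr_const_nat -[X in X <= _]mulr_natr.
  have -> : (m.*2 + 5 - 2 = 2 * m + 3)%N by lia.
  have : \sum_(2 <= r < m.*2 + 5) a r + a (m.*2 + 5)%N = m%:R + 1.
    by rewrite natr1 -sum_a (_ : (m.*2 + 6 = (m.*2 + 5).+1)%N) ?big_nat_recr //; lia.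
  by rewrite e2m3 => ? ?; nra.
Qed.

Lemma cond2_of_Efun0 : a0 < 0 -> a 2%N <= a0 -> Efun m a = 0 -> cond2 m a.
Proof.
move=> a0_lt a2_le; have [a0_ge [_ [_ [_ [top _]]]]] := adm.
rewrite Efun_sum (@big_ltn _ _ _ 2) ?(Eterm_le (ltW a0_lt) a2_le) => [E0|]; last lia.
have below r : (3 <= r)%N -> (r < m.*2 + 6)%N -> a r <= 1 + a0.
  by move=> r3 rN; have [_ ?] := admissible_sorted (ltnW r3) rN; lra.
have rest0 : \sum_(3 <= r < m.*2 + 6) - Eterm a0 (a r) = 0 by rewrite sumrN; lra.
have rest_ge0 r : (3 <= r < m.*2 + 6)%N -> 0 <= - Eterm a0 (a r).
  by move=> /andP [r3 rN]; rewrite oppr_ge0 Eterm_le0 ?below // ltW.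
split=> // r r3 rN; split; last exact: below.
rewrite leNgt; apply/negP => ar_lt.
have := psumr_eq0_nat rest_ge0 rest0 (r := r); rewrite r3 rN => /(_ isT).
by have := Eterm_lt0 a0_ge a0_lt ar_lt; lra.
Qed.

Lemma Efun_gt0 : a0 < 0 -> 1 - a0 <= a (m.*2 + 5)%N -> 0 < Efun m a.
Proof.
move=> a0_lt top_ge; have [_ [_ [_ [_ [top _]]]]] := adm.
suff : 0 <= \sum_(2 <= r < m.*2 + 6) Eterm a0 (a r) by rewrite Efun_sum; lra.
apply: sumr_ge0_nat => r /andP [r2 rN]; apply: Eterm_ge0; first exact: ltW.
by have [? _] := admissible_sorted r2 rN; lra.
Qed.

Lemma cond3_of_Efun0 : - 2^-1 < a0 -> a0 < 0 -> interior m a -> Efun m a = 0 ->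
  cond3 m a.
Proof.
move=> a0_gt a0_lt inside E0; have [_ [_ [_ [_ [_ sum_a]]]]] := adm.
have mid_eq : Mid = m%:R + 1 - B + (A - 2 - B) * a0.
  by move: E0; rewrite Efun_interior ?ltW //; lra.
have [A_le B_le] := cnt_bounds a0_gt mid_eq.
split=> //; first by rewrite cntA_ge2 ?ltW.
by rewrite natrSB // -addn1.
Qed.

Lemma Efun_eq0_cases : Efun m a = 0 -> cond1 m a \/ cond2 m a \/ cond3 m a.
Proof.
move=> E0; have [a0_ge [a0_le _]] := adm.
have [a0_0|a0_n0] := eqVneq a0 0; first by left; left.
have [a0_half|a0_nhalf] := eqVneq a0 (- 2^-1); first by left; right.
have a0_lt : a0 < 0 by rewrite lt_neqAle a0_n0.
have a0_gt : - 2^-1 < a0 by rewrite lt_neqAle eq_sym a0_nhalf.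
right; have [a2_le|a2_gt] := lerP (a 2%N) a0; first by left; exact: cond2_of_Efun0.
right; have [top_lt|top_ge] := ltrP (a (m.*2 + 5)%N) (1 - a0); last first.
  by have := Efun_gt0 a0_lt top_ge; rewrite E0 ltxx.
apply: cond3_of_Efun0 => // r r2 rN.
by have [? ?] := admissible_sorted r2 rN; split; lra.
Qed.

Lemma Efun_half : a0 = - 2^-1 -> Efun m a = 0.
Proof.
move=> a0_half; have [_ [_ [_ [_ [_ sum_a]]]]] := adm.
have [a2_ge top_le] := admissible_spread.
rewrite Efun_sum a0_half (eq_big_nat _ _ (F2 := fun r => a r - 2^-1)); last first.
  move=> r /andP [r2 rN]; have [? ?] := admissible_sorted r2 rN.
  by rewrite Eterm_half //; lra.
by rewrite sumrB sum_a sumr_const_range -(natr1 m); lra.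
Qed.

Lemma Efun_eq0_of_cases : cond1 m a \/ cond2 m a \/ cond3 m a -> Efun m a = 0.
Proof.
have [a0_ge [a0_le [_ [_ [_ sum_a]]]]] := adm.
case=> [[a0_0|a0_half]|[[a2_le middle_rest]|c3]].
- by rewrite Efun_sum a0_0 big1 => [|r _]; rewrite ?Eterm0 //; lra.
- exact: Efun_half.
- rewrite Efun_sum (@big_ltn _ _ _ 2); last lia.
  rewrite Eterm_le // big_nat_cond big1; first lra.
  move=> r /andP [/andP [r3 rN] _].
  by have [? ?] := middle_rest r r3 rN; apply: Eterm_mid.
- have [inside _ _ _] := c3.
  by rewrite Efun_interior // cond3_middle_eq //; lra.
Qed.

Lemma cond3_cntA_top : cond3 m a -> cntA m a = (m + 3)%N ->
  forall r, (2 <= r)%N -> (r < m.*2 + 6)%N -> middle a r -> a r = 1 + a0.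
Proof.
move=> c3 A_top; have [a0_ge _] := adm.
have [gapA _] := middle_gaps a0_ge (cond3_middle_eq c3).
by apply: middle_eq_top; move: gapA; rewrite A_top natrD; lra.
Qed.

Lemma cond3_cntB_top : cond3 m a -> cntB m a = (m + 1)%N ->
  forall r, (2 <= r)%N -> (r < m.*2 + 6)%N -> middle a r -> a r = - a0.
Proof.
move=> c3 B_top; have [a0_ge _] := adm.
have [_ gapB] := middle_gaps a0_ge (cond3_middle_eq c3).
by apply: middle_eq_bottom; move: gapB; rewrite B_top natrD; lra.
Qed.

End Efun_zero.

Definition step3 (T : Type) (k1 k2 : nat) (x y z : T) (r : nat) : T :=
  if (r < k1)%N then x else if (r < k2)%N then y else z.

Lemma step3_comp (T U : Type) (f : T -> U) k1 k2 (x y z : T) r :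
  f (step3 k1 k2 x y z r) = step3 k1 k2 (f x) (f y) (f z) r.
Proof. by rewrite /step3; case: ifP => _ //; case: ifP. Qed.

Lemma step3_cases (T : Type) k1 k2 (x y z : T) r :
  [\/ step3 k1 k2 x y z r = x, step3 k1 k2 x y z r = y | step3 k1 k2 x y z r = z].
Proof. by rewrite /step3; case: ifP => _; [constructor 1|case: ifP => _; constructor]. Qed.

Lemma step3_homo d (T : porderType d) k1 k2 (x y z : T) :
  (x <= y)%O -> (y <= z)%O ->
  {homo step3 k1 k2 x y z : i j / (i <= j)%N >-> (i <= j)%O}.
Proof.
move=> le_xy le_yz i j le_ij; have le_xz := le_trans le_xy le_yz; rewrite /step3.
case: (ltnP j k1) => j1; first by rewrite (leq_ltn_trans le_ij j1).
case: (ltnP j k2) => j2; first by case: ifP => // _; rewrite (leq_ltn_trans le_ij j2).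
by case: ifP => // _; case: ifP.
Qed.

Lemma sum_step3 (V : nmodType) lo k1 k2 hi (x y z : V) :
  (lo <= k1 <= k2)%N -> (k2 <= hi)%N ->
  \sum_(lo <= r < hi) step3 k1 k2 x y z r = x *+ (k1 - lo) + y *+ (k2 - k1) + z *+ (hi - k2).
Proof.
move=> /andP [lo_k1 k1_k2] k2_hi.
rewrite (big_cat_nat lo_k1 (leq_trans k1_k2 k2_hi)) (big_cat_nat k1_k2 k2_hi) /= addrA.
rewrite -!sumr_const_nat; congr (_ + _ + _); apply: eq_big_nat => r /andP [r1 r2];
  rewrite /step3 ?r2 ?ifF //; apply/negbTE; rewrite -leqNgt //.
exact: leq_trans k1_k2 r1.
Qed.

Lemma outer_levels (R : realFieldType) (a0 : R) (A B : nat) : a0 < 0 -> (2 <= A)%N ->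
  exists L H : R, [/\ a0 < L < - a0, 1 + a0 < H < 1 - a0, H <= L + 1 &
    L * A%:R + H * B%:R = B%:R - (A%:R - 2 - B%:R) * a0].
Proof.
move=> a0_lt A_ge2.
have A_ge : 2 <= A%:R :> R by rewrite (ler_nat R 2).
have B_ge : 0 <= B%:R :> R by apply: ler0n.
(* The levels are [- a0 - t] and [1 + a0 + s], with [s] small and [t]
   solving the sum equation. *)
pose s := - a0 / (A%:R + B%:R); pose t := (- 2 * a0 + B%:R * s) / A%:R.
have s_def : s * (A%:R + B%:R) = - a0 by rewrite divfK //; apply: lt0r_neq0; lra.
have t_def : t * A%:R = - 2 * a0 + B%:R * s by rewrite divfK //; apply: lt0r_neq0; lra.
have s_gt0 : 0 < s by rewrite divr_gt0 //; lra.
have t_gt0 : 0 < t by rewrite divr_gt0 //; nra.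
(* [(s + t) A = - 3 a0 <= - 2 a0 A] *)
have st_le : s + t <= - 2 * a0 by nra.
exists (- a0 - t), (1 + a0 + s); split; [apply/andP; split | apply/andP; split | | ];
  nra.
Qed.

Lemma middle_level (R : realFieldType) (m : nat) (a0 : R) (A B : nat) :
  - 2^-1 <= a0 -> (A <= m + 3)%N -> (B <= m + 1)%N ->
  exists mu : R, - a0 <= mu <= 1 + a0 /\
    mu * (m.*2 + 4 - (A + B))%:R = m%:R + 1 - B%:R + (A%:R - 2 - B%:R) * a0.
Proof.
move=> a0_ge A_le B_le; set M := (m.*2 + 4 - (A + B))%N.
have M_def : M%:R = 2 * m%:R + 4 - A%:R - B%:R :> R.
  by rewrite /M natrB ?natrD -?mul2n ?natrM; [lra|lia].
have A_le' : A%:R <= m%:R + 3 :> R by rewrite -(natrD _ m 3) ler_nat.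
have B_le' : B%:R <= m%:R + 1 :> R by rewrite -(natrD _ m 1) ler_nat.
have [M0|M_gt0] := posnP M.
  have [-> ->] : A = (m + 3)%N /\ B = (m + 1)%N by move: M0; rewrite /M; lia.
  exists (- a0); rewrite M0 ?natrD mulr0; split; [apply/andP; split|]; lra.
have M_pos : 0 < M%:R :> R by rewrite ltr0n.
exists ((m%:R + 1 - B%:R + (A%:R - 2 - B%:R) * a0) / M%:R).
split; last by rewrite divfK // lt0r_neq0.
rewrite ler_pdivlMr ?ler_pdivrMr // M_def; apply/andP; split; nra.
Qed.

Section ThreeLevels.
Variables (R : realFieldType) (m : nat) (a0 L mu H : R) (A B : nat).

Definition three_levels (r : nat) : R :=
  if r == 0%N then a0 else if r == 1%N then - a0
  else step3 (A + 2) (m.*2 + 6 - B) L mu H r.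

Local Notation a := three_levels.
Local Notation M := (m.*2 + 4 - (A + B))%N.

Lemma three_levels0 : a 0%N = a0. Proof. by []. Qed.

Lemma three_levels_step r : (2 <= r)%N -> a r = step3 (A + 2) (m.*2 + 6 - B) L mu H r.
Proof. by case: r => [|[|r]]. Qed.

Hypothesis AB_le : (A + B <= m.*2 + 4)%N.

Lemma three_levels_sum (F : R -> R) :
  \sum_(2 <= r < m.*2 + 6) F (a r) = F L * A%:R + F mu * M%:R + F H * B%:R.
Proof.
rewrite (eq_big_nat _ _ (F2 := step3 (A + 2) (m.*2 + 6 - B) (F L) (F mu) (F H)));
  last by case=> [|[|r]] // _; apply: step3_comp.
rewrite sum_step3 ?mulr_natr; [|lia..].
by congr (_ *+ _ + _ *+ _ + _ *+ _); lia.
Qed.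

Hypotheses (le_Lmu : L <= mu) (le_muH : mu <= H).

Lemma three_levels_cntA : L < - a0 -> - a0 <= mu -> cntA m a = A.
Proof.
move=> L_lt mu_ge; have H_ge := le_trans mu_ge le_muH.
apply/eqP; rewrite -(eqr_nat R) cntA_sum three_levels_sum three_levels0 /low_ind L_lt.
by rewrite ltNge mu_ge ltNge H_ge mul1r !mul0r !addr0.
Qed.

Lemma three_levels_cntB : mu <= 1 + a0 -> 1 + a0 < H -> cntB m a = B.
Proof.
move=> mu_le H_gt; have L_le := le_trans le_Lmu mu_le.
apply/eqP; rewrite -(eqr_nat R) cntB_sum three_levels_sum three_levels0 /high_ind H_gt.
by rewrite ltNge L_le ltNge mu_le mul1r !mul0r !add0r.
Qed.

Lemma three_levels_interior : a0 < L -> H < 1 - a0 -> interior m a.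
Proof.
move=> L_gt H_lt r r2 _; rewrite three_levels0 three_levels_step //.
have := le_Lmu; have := le_muH.
by case: (step3_cases (A + 2) (m.*2 + 6 - B) L mu H r) => -> ? ?; split; lra.
Qed.

Lemma three_levels_admissible : - 2^-1 <= a0 -> a0 <= 0 -> (2 <= A)%N -> H <= L + 1 ->
  L * A%:R + mu * M%:R + H * B%:R = m%:R + 1 -> admissible m a.
Proof.
move=> a0_ge a0_le A_ge2 H_le sum_levels.
split; [by []|split; [by []|split; [by []|split]]].
  by case=> [|[|r]] // _ _; apply: step3_homo.
split.
  rewrite !three_levels_step; [|lia..].
  rewrite {2}/step3 ifT; last lia.
  have := le_Lmu; have := le_muH.
  by case: (step3_cases (A + 2) (m.*2 + 6 - B) L mu H (m.*2 + 5)) => -> ? ?; lra.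
by rewrite -[\sum_(_ <= _ < _) _]/(\sum_(2 <= r < m.*2 + 6) id (a r)) three_levels_sum -(natr1 m).
Qed.

Lemma three_levels_middle : L < - a0 -> - a0 <= mu -> mu <= 1 + a0 -> 1 + a0 < H ->
  \sum_(2 <= r < m.*2 + 6 | middle a r) a r = mu * M%:R.
Proof.
move=> L_lt mu_ge mu_le H_gt.
rewrite middle_sum (three_levels_sum (fun x => mid_ind (a 0%N) x * x)) three_levels0.
rewrite /mid_ind mu_ge mu_le (leNgt (- a0) L) L_lt (leNgt H) H_gt andbF.
by rewrite !mul0r mul1r add0r addr0.
Qed.

End ThreeLevels.

Lemma cond3_witness (R : realFieldType) (m : nat) (a0 : R) (A B : nat) :
  - 2^-1 < a0 -> a0 < 0 -> (2 <= A <= m + 3)%N -> (B <= m + 1)%N ->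
  exists a : nat -> R,
    [/\ admissible m a, a 0%N = a0, cond3 m a, cntA m a = A & cntB m a = B].
Proof.
move=> a0_gt a0_lt /andP [A_ge A_le] B_le.
have [L [H [/andP [L_gt L_lt] /andP [H_gt H_lt] H_le sum_LH]]] := outer_levels B a0_lt A_ge.
have [mu [/andP [mu_ge mu_le] sum_mu]] := middle_level (ltW a0_gt) A_le B_le.
have AB_le : (A + B <= m.*2 + 4)%N by lia.
have le_Lmu : L <= mu by lra.
have le_muH : mu <= H by lra.
have cntA_a := three_levels_cntA AB_le le_muH L_lt mu_ge.
have cntB_a := three_levels_cntB AB_le le_Lmu mu_le H_gt.
exists (three_levels m a0 L mu H A B); split=> //.
  by apply: three_levels_admissible => //; lra.
split.
- exact: three_levels_interior.
- by rewrite cntA_a A_ge.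
- by rewrite cntB_a.
- by rewrite three_levels_middle // cntA_a cntB_a natrSB ?sum_mu // -addn1.
Qed.

Theorem lemma3p4 (R : realFieldType) (m : nat) :
  (forall a : nat -> R, admissible m a ->
     [/\ Efun m a = 0 <-> (cond1 m a \/ cond2 m a \/ cond3 m a),
         (cond3 m a -> cntA m a = (m + 3)%N ->
            forall r : nat, (2 <= r)%N -> (r < m.*2 + 6)%N -> middle a r ->
              a r = 1 + a 0%N) &
         (cond3 m a -> cntB m a = (m + 1)%N ->
            forall r : nat, (2 <= r)%N -> (r < m.*2 + 6)%N -> middle a r ->
              a r = - a 0%N)]) /\
  (forall (a0 : R) (A B : nat),
     - 2^-1 < a0 -> a0 < 0 -> (2 <= A <= m + 3)%N -> (B <= m + 1)%N ->
     exists a : nat -> R,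
       [/\ admissible m a, a 0%N = a0, cond3 m a, cntA m a = A & cntB m a = B]).
Proof.
split=> [a adm|a0 A B]; last exact: cond3_witness.
split; first split.
- exact: Efun_eq0_cases.
- exact: Efun_eq0_of_cases.
- exact: cond3_cntA_top.
- exact: cond3_cntB_top.
Qed.
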